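(* Let $p_{1}, p_{2}, r \in \mathbb N$ and $T(p_{1},p_{2},r):=\sum_{n=1}^\infty \frac{(-1)^{n+1}H_n^{(p_{1})}H_n^{(p_{2})}}{n+r}$. Then \begin{align*} T(p_{1},p_{2},r) &=(-1)^{r}\left(S_{p_{1},p_{2},1}^{+,+,-}-S_{p_{1},p_{2}+1}^{+,-}-S_{p_{2},p_{1}+1}^{+,-}+\overline{\zeta}(p_{1}+p_{2}+1)\right)\\ &\quad +\sum_{j=1}^{r-1}(-1)^{r-1-j}\big(S(p_{1},p_{2},1,j,1)+S(p_{2},p_{1},1,j,1)\big) +\sum_{j=1}^{r-1}(-1)^{r-j}S(0,p_{1}+p_{2}+1,1,j,1)\,. \end{align*}
   Context: $H_n^{(q)}=\sum_{j=1}^n j^{-q}$ for $q\in\mathbb N$, and $H_n^{(0)}:=n$. For $q\in\{0\}\cup\mathbb N$ and $m,t,j\in\mathbb N$, $S(q,m,t,j,1):=\sum_{n=1}^\infty\frac{(-1)^{n+1}H_n^{(q)}}{n^{m}(n+j)^{t}}$. $S_{p,q}^{+,-}:=\sum_{n\ge1}(-1)^{n-1}H_n^{(p)}/n^q$, $S_{p_1,p_2,q}^{+,+,-}:=\sum_{n\ge1}(-1)^{n-1}H_n^{(p_1)}H_n^{(p_2)}/n^q$, and $\overline{\zeta}(s)=\sum_{n\ge1}(-1)^{n-1}n^{-s}$. Empty sums are $0$. *)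

From Stdlib Require Import Reals.
From Coquelicot Require Import Coquelicot.
Open Scope R_scope.

(* Generalized harmonic number H_n^{(q)} = sum_{j=1}^n j^{-q}.
   For q = 0 this gives n, matching the convention H_n^{(0)} := n. *)
Fixpoint harm (q n : nat) : R :=
  match n with
  | O => 0
  | S m => harm q m + / (INR (S m) ^ q)
  end.

(* Value of a series sum_{n>=1} f n, as the limit of partial sums. *)
Definition sum1 (f : nat -> R) : R := Series (fun k => f (S k)).
Definition conv1 (f : nat -> R) : Prop := ex_series (fun k => f (S k)).

Definition S5_term (q m t j : nat) (n : nat) : R :=
  (-1) ^ (n + 1) * harm q n / (INR n ^ m * INR (n + j) ^ t).
Definition Spm_term (p q : nat) (n : nat) : R :=
  (-1) ^ (n - 1) * harm p n / INR n ^ q.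
Definition Sppm_term (p1 p2 q : nat) (n : nat) : R :=
  (-1) ^ (n - 1) * harm p1 n * harm p2 n / INR n ^ q.
Definition zetabar_term (s : nat) (n : nat) : R :=
  (-1) ^ (n - 1) / INR n ^ s.
Definition T_term (p1 p2 r : nat) (n : nat) : R :=
  (-1) ^ (n + 1) * harm p1 n * harm p2 n / INR (n + r).

Definition S5 (q m t j : nat) : R := sum1 (S5_term q m t j).
Definition Spm (p q : nat) : R := sum1 (Spm_term p q).
Definition Sppm (p1 p2 q : nat) : R := sum1 (Sppm_term p1 p2 q).
Definition zetabar (s : nat) : R := sum1 (zetabar_term s).

(* finite sum over j = a..b, zero if b < a *)
Fixpoint fsum_from (a : nat) (len : nat) (g : nat -> R) : R :=
  match len with
  | O => 0
  | S l => g a + fsum_from (S a) l g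
  end.
Definition fsum (a b : nat) (g : nat -> R) : R := fsum_from a (S b - a) g.

(* Writing H_n = H_{n+1} - (n+1)^(-p) in both harmonic factors turns the series T(r+1) into
   -T(r) + S(p1,p2,1,r,1) + S(p2,p1,1,r,1) - S(0,p1+p2+1,1,r,1); unrolling this first-order
   recurrence down to T(0) = S^{+,+,-}_{p1,p2,1}, whose j = 0 terms are S^{+,-} and zetabar
   values, gives the formula.
   The S-series converge absolutely: their terms are dominated by (1 + H_n)^2 / n^2, which is
   summable because H_n <= 4 n^(1/4). The series T(0) is only conditionally convergent; Abel
   summation applies since H^(p1)_n H^(p2)_n / n tends to 0 and its increments are dominated by
   the same summable sequence. *)

From Stdlib Require Import Reals Lra Lia.
From Coquelicot Require Import Coquelicot.
Open Scope R_scope.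

Lemma harm_S q n : harm q (S n) = harm q n + / INR (S n) ^ q.
Proof. reflexivity. Qed.

Lemma harm_ge0 q n : 0 <= harm q n.
Proof.
  induction n as [|n IH]; rewrite ?harm_S; [simpl; lra|].
  assert (0 < / INR (S n) ^ q) by (apply Rinv_0_lt_compat, pow_lt, lt_0_INR; lia).
  lra.
Qed.

Lemma harm_le_harm1 q n : (1 <= q)%nat -> harm q n <= harm 1 n.
Proof.
  intros Hq; induction n as [|n IH]; rewrite ?harm_S; [simpl; lra|].
  assert (/ INR (S n) ^ q <= / INR (S n) ^ 1).
  { apply Rinv_le_contravar; [apply pow_lt, lt_0_INR; lia|].
    apply Rle_pow; [apply (le_INR 1); lia | exact Hq]. }
  lra.
Qed.

Lemma harm0 n : harm 0 n = INR n.
Proof. induction n as [|n IH]; [reflexivity|]. rewrite harm_S, IH, S_INR. simpl. lra. Qed.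

(* With x, y the fourth roots of n + 1 and n, 1 = x^4 - y^4 <= 4 x^3 (x - y),
   so the increment 1/(n+1) = 1/x^4 is at most 4 (x - y). *)
Lemma harm1_le_root4 n : harm 1 n <= 4 * sqrt (sqrt (INR n)).
Proof.
  induction n as [|n IH].
  - simpl. rewrite sqrt_0, sqrt_0. lra.
  - rewrite harm_S. set (x := sqrt (sqrt (INR (S n)))) in *. set (y := sqrt (sqrt (INR n))) in *.
    assert (root4 : forall t, 0 <= t -> sqrt (sqrt t) ^ 4 = t).
    { intros t Ht. replace (sqrt (sqrt t) ^ 4) with
        ((sqrt (sqrt t) * sqrt (sqrt t)) * (sqrt (sqrt t) * sqrt (sqrt t))) by ring.
      rewrite sqrt_sqrt by apply sqrt_pos. apply sqrt_sqrt, Ht. }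
    assert (hx4 : x ^ 4 = INR n + 1) by (unfold x; rewrite root4, S_INR; [lra | apply pos_INR]).
    assert (hy4 : y ^ 4 = INR n) by (apply root4, pos_INR).
    assert (hy : 0 <= y) by apply sqrt_pos.
    assert (hxy : y <= x) by (apply sqrt_le_1_alt, sqrt_le_1_alt; rewrite S_INR; lra).
    assert (hx1 : 1 <= x).
    { rewrite <- sqrt_1, <- sqrt_1 at 1. apply sqrt_le_1_alt, sqrt_le_1_alt.
      rewrite S_INR; pose proof (pos_INR n); lra. }
    assert (hx4pos : 0 < x ^ 4) by (apply pow_lt; lra).
    assert (mvt : 1 <= 4 * (x - y) * x ^ 4).
    { assert (1 = (x - y) * ((x + y) * (x ^ 2 + y ^ 2))) by nra.
      assert ((x + y) * (x ^ 2 + y ^ 2) <= (2 * x) * (2 * x ^ 2)) by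
        (apply Rmult_le_compat; nra).
      assert (1 <= (x - y) * (4 * x ^ 3)) by nra.
      assert (x ^ 3 <= x ^ 4) by (apply Rle_pow; [lra | lia]).
      nra. }
    assert (/ x ^ 4 <= 4 * (x - y)).
    { apply (Rmult_le_reg_r (x ^ 4)); [exact hx4pos|]. rewrite Rinv_l; lra. }
    rewrite pow_1, S_INR, <- hx4. lra.
Qed.

Lemma is_series_telescope (u : nat -> R) (l : R) :
  is_lim_seq u l -> is_series (fun k => u k - u (S k)) (u O - l).
Proof.
  intros Hu.
  assert (partial : forall N, sum_n (fun k => u k - u (S k)) N = u O - u (S N)).
  { induction N as [|N IH]; [apply sum_O|].
    rewrite sum_Sn, IH. unfold plus; simpl. ring. }
  change (is_lim_seq (sum_n (fun k => u k - u (S k))) (u O - l)).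
  apply (is_lim_seq_ext (fun N => u O - u (S N))); [intros N; symmetry; apply partial|].
  apply is_lim_seq_minus'; [apply is_lim_seq_const | apply (is_lim_seq_incr_1 u l), Hu].
Qed.

Lemma is_lim_seq_inv_sqrt : is_lim_seq (fun n => / sqrt (INR n)) 0.
Proof.
  replace (Finite 0) with (Rbar_inv p_infty) by reflexivity.
  apply is_lim_seq_inv; [|discriminate].
  apply (is_lim_comp_seq sqrt INR p_infty p_infty).
  - apply is_lim_sqrt_p, is_lim_id.
  - exists O. discriminate.
  - apply is_lim_seq_INR.
Qed.

Definition harm_majorant (n : nat) : R := (1 + harm 1 n) ^ 2 / INR n ^ 2.

Lemma harm_majorant_le_telescope n : (1 <= n)%nat ->
  harm_majorant n <= 100 * (/ sqrt (INR n) - / sqrt (INR (S n))).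
Proof.
  intros Hn.
  assert (hn1 : 1 <= INR n) by (apply (le_INR 1), Hn).
  set (a := sqrt (INR n)). set (b := sqrt (INR (S n))).
  assert (ha2 : a * a = INR n) by (apply sqrt_sqrt; lra).
  assert (hb2 : b * b = INR n + 1) by (unfold b; rewrite S_INR, sqrt_sqrt; lra).
  assert (ha1 : 1 <= a) by (unfold a; rewrite <- sqrt_1; apply sqrt_le_1_alt; lra).
  assert (hb0 : 0 <= b) by apply sqrt_pos.
  assert (hab : a < b) by nra.
  assert (hb : b <= 3 / 2 * a) by nra.
  assert (harm_a : (1 + harm 1 n) ^ 2 <= 25 * a).
  { set (s := sqrt a). assert (hs : s * s = a) by (apply sqrt_sqrt; lra).
    assert (hs1 : 1 <= s) by (unfold s; rewrite <- sqrt_1; apply sqrt_le_1_alt; lra).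
    pose proof (harm1_le_root4 n) as Hroot. change (sqrt (sqrt (INR n))) with s in Hroot.
    pose proof (harm_ge0 1 n). nra. }
  assert (maj_a : harm_majorant n <= 25 / (a * a * a)).
  { unfold harm_majorant. rewrite <- ha2.
    apply (Rle_trans _ (25 * a / (a * a) ^ 2)).
    - apply Rmult_le_compat_r; [apply Rlt_le, Rinv_0_lt_compat; nra | exact harm_a].
    - right. field. lra. }
  assert (diff : / a - / b = / (a * b * (a + b))).
  { assert ((b - a) * (a + b) = 1) by nra. field_simplify_eq; nra. }
  rewrite diff.
  assert (a * b * (a + b) <= (3 / 2 * (a * a)) * (5 / 2 * a)) by
    (apply Rmult_le_compat; nra).
  apply (Rle_trans _ _ _ maj_a).
  replace (100 * / (a * b * (a + b))) with (25 / (a * b * (a + b) / 4)) by (field; nra).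
  apply Rmult_le_compat_l; [lra|]. apply Rinv_le_contravar; nra.
Qed.

Lemma ex_series_harm_majorant : ex_series (fun k => harm_majorant (S k)).
Proof.
  apply (@ex_series_le R_AbsRing R_CompleteNormedModule _
           (fun k => 100 * (/ sqrt (INR (S k)) - / sqrt (INR (S (S k)))))).
  - intros k. change (norm (harm_majorant (S k))) with (Rabs (harm_majorant (S k))).
    rewrite Rabs_pos_eq; [apply harm_majorant_le_telescope; lia|].
    unfold harm_majorant. apply Rmult_le_pos; [apply pow2_ge_0|].
    apply Rlt_le, Rinv_0_lt_compat, pow_lt, lt_0_INR; lia.
  - apply (@ex_series_scal_l R_AbsRing R_NormedModule 100). eexists.
    apply (is_series_telescope (fun k => / sqrt (INR (S k))) 0).
    apply (is_lim_seq_incr_1 (fun n => / sqrt (INR n))), is_lim_seq_inv_sqrt.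
Qed.

Lemma sum_n_alt N : sum_n (fun k => (-1) ^ k) N = (1 + (-1) ^ N) / 2.
Proof.
  induction N as [|N IH]; [rewrite sum_O; simpl; field|].
  rewrite sum_Sn, IH. unfold plus; simpl. field.
Qed.

Lemma ex_series_alt_bounded_variation (a : nat -> R) :
  is_lim_seq a 0 -> ex_series (fun k => Rabs (a (S k) - a k)) ->
  ex_series (fun k => (-1) ^ k * a k).
Proof.
  intros Ha Hvar.
  apply (ex_series_ext (fun k => scal (a k) ((-1) ^ k))); [intros k; apply Rmult_comm|].
  apply partial_summation_R; [|exact Ha|exact Hvar].
  exists 1. intros N. change (norm _) with (Rabs (sum_n (fun k => (-1) ^ k) N)).
  rewrite sum_n_alt.
  pose proof (Rle_abs ((-1) ^ N)). pose proof (Rle_abs (- (-1) ^ N)).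
  rewrite Rabs_Ropp, pow_1_abs in *. apply Rabs_le. lra.
Qed.

Lemma increment_ratio_le (N h1 h2 x y H : R) :
  1 <= N -> 0 <= h1 <= H -> 0 <= h2 <= H -> 0 <= x <= / (N + 1) -> 0 <= y <= / (N + 1) ->
  Rabs ((h1 + x) * (h2 + y) / (N + 1) - h1 * h2 / N) <= (1 + H) ^ 2 / N ^ 2.
Proof.
  intros HN Hh1 Hh2 Hx Hy.
  set (u := / N). set (v := / (N + 1)) in *.
  assert (hu : 0 < u <= 1)
    by (split; [apply Rinv_0_lt_compat | rewrite <- Rinv_1; apply Rinv_le_contravar]; lra).
  assert (hv : 0 < v <= u) by (split; [apply Rinv_0_lt_compat | apply Rinv_le_contravar]; lra).
  replace ((h1 + x) * (h2 + y) / (N + 1) - h1 * h2 / N)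
    with ((h1 * y + h2 * x + x * y) * v - h1 * h2 * u * v) by (unfold u, v; field; lra).
  replace ((1 + H) ^ 2 / N ^ 2) with ((1 + H) ^ 2 * (u * u)) by (unfold u; field; lra).
  assert (gain : 0 <= (h1 * y + h2 * x + x * y) * v <= (2 * H + 1) * (u * u)).
  { split; [apply Rmult_le_pos; nra|].
    assert (h1 * y + h2 * x + x * y <= (2 * H + 1) * u) by nra.
    rewrite <- Rmult_assoc. apply Rmult_le_compat; nra. }
  assert (loss : 0 <= h1 * h2 * u * v <= H * H * (u * u)).
  { split; [repeat apply Rmult_le_pos; lra|].
    replace (h1 * h2 * u * v) with ((h1 * h2) * (u * v)) by ring.
    apply Rmult_le_compat; nra. }
  apply Rabs_le. nra.
Qed.

Lemma inv_pow_le_inv (x : R) (q : nat) : 1 <= x -> (1 <= q)%nat -> 0 <= / x ^ q <= / x.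
Proof.
  intros Hx Hq. split; [apply Rlt_le, Rinv_0_lt_compat, pow_lt; lra|].
  apply Rinv_le_contravar; [lra|]. rewrite <- (pow_1 x) at 1. apply Rle_pow; assumption.
Qed.

Lemma neg1_pow_S_add1 k : (-1) ^ (S k + 1) = (-1) ^ k.
Proof. rewrite Nat.add_1_r. simpl. ring. Qed.

Section HarmProductRatio.
Variables p1 p2 : nat.
Hypothesis hp1 : (1 <= p1)%nat.
Hypothesis hp2 : (1 <= p2)%nat.

Definition harm_prod_div (n : nat) : R := harm p1 n * harm p2 n / INR n.

Lemma harm_prod_div_bound n : (1 <= n)%nat -> 0 <= harm_prod_div n <= 16 * / sqrt (INR n).
Proof.
  intros Hn. unfold harm_prod_div.
  assert (hN : 1 <= INR n) by (apply (le_INR 1), Hn).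
  pose proof (harm_le_harm1 p1 n hp1). pose proof (harm_le_harm1 p2 n hp2).
  pose proof (harm_ge0 p1 n). pose proof (harm_ge0 p2 n).
  pose proof (harm1_le_root4 n) as Hroot.
  set (a := sqrt (INR n)) in *. set (s := sqrt a) in Hroot.
  assert (ha : a * a = INR n) by (apply sqrt_sqrt; lra).
  assert (hs : s * s = a) by (apply sqrt_sqrt, sqrt_pos).
  assert (ha1 : 1 <= a) by (unfold a; rewrite <- sqrt_1; apply sqrt_le_1_alt; lra).
  assert (hs0 : 0 <= s) by apply sqrt_pos.
  assert (hprod : harm p1 n * harm p2 n <= 16 * a) by nra.
  split; [apply Rmult_le_pos; [nra | apply Rlt_le, Rinv_0_lt_compat; lra]|].
  rewrite <- ha. apply (Rle_trans _ (16 * a / (a * a))).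
  - apply Rmult_le_compat_r; [apply Rlt_le, Rinv_0_lt_compat; nra | exact hprod].
  - right. field. lra.
Qed.

Lemma is_lim_seq_harm_prod_div : is_lim_seq (fun k => harm_prod_div (S k)) 0.
Proof.
  apply (is_lim_seq_le_le (fun _ => 0) _ (fun k => 16 * / sqrt (INR (S k)))).
  - intros k. apply harm_prod_div_bound. lia.
  - apply is_lim_seq_const.
  - replace (Finite 0) with (Rbar_mult 16 0) by (simpl; f_equal; ring).
    apply is_lim_seq_scal_l, (is_lim_seq_incr_1 (fun n => / sqrt (INR n))), is_lim_seq_inv_sqrt.
Qed.

Lemma harm_prod_div_variation k :
  Rabs (harm_prod_div (S (S k)) - harm_prod_div (S k)) <= harm_majorant (S k).
Proof.
  unfold harm_prod_div, harm_majorant.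
  rewrite (harm_S p1 (S k)), (harm_S p2 (S k)), (S_INR (S k)).
  assert (hN : 1 <= INR (S k)) by (apply (le_INR 1); lia).
  apply increment_ratio_le; try apply inv_pow_le_inv; try lra; try assumption;
    split; try apply harm_ge0; apply harm_le_harm1; assumption.
Qed.

Lemma T_term_0_S k : T_term p1 p2 0 (S k) = (-1) ^ k * harm_prod_div (S k).
Proof. unfold T_term, harm_prod_div. rewrite Nat.add_0_r, neg1_pow_S_add1. unfold Rdiv. ring. Qed.

Lemma ex_series_T_term_0 : ex_series (fun k => T_term p1 p2 0 (S k)).
Proof.
  apply (ex_series_ext (fun k => (-1) ^ k * harm_prod_div (S k))).
  { intros k. symmetry. apply T_term_0_S. }
  apply ex_series_alt_bounded_variation; [apply is_lim_seq_harm_prod_div|].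
  apply (@ex_series_le R_AbsRing R_CompleteNormedModule _ (fun k => harm_majorant (S k)));
    [|apply ex_series_harm_majorant].
  intros k. change (norm ?x) with (Rabs x). rewrite Rabs_Rabsolu. apply harm_prod_div_variation.
Qed.

End HarmProductRatio.

Lemma Rabs_S5_term_le q m j n : (1 <= n)%nat ->
  Rabs (S5_term q m 1 j n) <= harm q n / INR n ^ S m.
Proof.
  intros Hn. unfold S5_term.
  assert (hN : 1 <= INR n) by (apply (le_INR 1), Hn).
  assert (hNm : 0 < INR n ^ m) by (apply pow_lt; lra).
  assert (hNj : INR n <= INR (n + j)) by (apply le_INR; lia).
  unfold Rdiv. rewrite Rmult_assoc, Rabs_mult, pow_1_abs, Rmult_1_l, pow_1, Rabs_pos_eq.
  2: { apply Rmult_le_pos; [apply harm_ge0 | apply Rlt_le, Rinv_0_lt_compat; nra]. }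
  apply Rmult_le_compat_l; [apply harm_ge0|].
  apply Rinv_le_contravar; [simpl; nra|]. simpl. rewrite Rmult_comm.
  apply Rmult_le_compat_l; lra.
Qed.

Lemma ex_series_S5_term_dominated q m j :
  (forall n, (1 <= n)%nat -> harm q n / INR n ^ S m <= harm_majorant n) ->
  ex_series (fun k => S5_term q m 1 j (S k)).
Proof.
  intros Hdom.
  apply (@ex_series_le R_AbsRing R_CompleteNormedModule _ (fun k => harm_majorant (S k)));
    [|apply ex_series_harm_majorant].
  intros k. apply (Rle_trans _ _ _ (Rabs_S5_term_le q m j (S k) ltac:(lia))). apply Hdom. lia.
Qed.

Lemma harm_div_pow_le_majorant q m n : (1 <= q)%nat -> (1 <= m)%nat -> (1 <= n)%nat ->
  harm q n / INR n ^ S m <= harm_majorant n.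
Proof.
  intros Hq Hm Hn. unfold harm_majorant.
  assert (hN : 1 <= INR n) by (apply (le_INR 1), Hn).
  pose proof (harm_le_harm1 q n Hq). pose proof (harm_ge0 q n). pose proof (harm_ge0 1 n).
  apply Rmult_le_compat; [apply harm_ge0 | apply Rlt_le, Rinv_0_lt_compat, pow_lt; lra | nra|].
  apply Rinv_le_contravar; [apply pow_lt; lra|]. apply Rle_pow; [lra | lia].
Qed.

Lemma harm0_div_pow_le_majorant m n : (2 <= m)%nat -> (1 <= n)%nat ->
  harm 0 n / INR n ^ S m <= harm_majorant n.
Proof.
  intros Hm Hn. unfold harm_majorant. rewrite harm0.
  assert (hN : 1 <= INR n) by (apply (le_INR 1), Hn).
  assert (hpow : INR n ^ 2 <= INR n ^ m) by (apply Rle_pow; [lra | lia]).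
  pose proof (harm_ge0 1 n).
  replace (INR n / INR n ^ S m) with (1 / INR n ^ m)
    by (simpl; field; split; [apply pow_nonzero|]; lra).
  apply Rmult_le_compat; [lra | apply Rlt_le, Rinv_0_lt_compat, pow_lt; lra | nra|].
  apply Rinv_le_contravar; [apply pow_lt; lra | exact hpow].
Qed.

Lemma T_term_at_0 p1 p2 r : T_term p1 p2 r 0 = 0.
Proof. unfold T_term. simpl harm. unfold Rdiv. ring. Qed.

Lemma T_term_succ p1 p2 r n :
  T_term p1 p2 (S r) n = S5_term p1 p2 1 r (S n) + S5_term p2 p1 1 r (S n)
                         - S5_term 0 (p1 + p2 + 1) 1 r (S n) - T_term p1 p2 r (S n).
Proof.
  unfold T_term, S5_term. rewrite harm0, !harm_S, !Nat.add_1_r, <- !tech_pow_Rmult.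
  replace (n + S r)%nat with (S n + r)%nat by lia.
  assert (hM : 0 < INR (S n)) by (apply lt_0_INR; lia).
  assert (hR : 0 < INR (S n + r)) by (apply lt_0_INR; lia).
  rewrite !pow_add. field. repeat split; try apply pow_nonzero; lra.
Qed.

Section Recursion.
Variables p1 p2 : nat.
Hypothesis hp1 : (1 <= p1)%nat.
Hypothesis hp2 : (1 <= p2)%nat.

Lemma ex_series_S5_terms r :
  ex_series (fun k => S5_term p1 p2 1 r (S k)) /\ ex_series (fun k => S5_term p2 p1 1 r (S k)) /\
  ex_series (fun k => S5_term 0 (p1 + p2 + 1) 1 r (S k)).
Proof.
  split; [|split]; apply ex_series_S5_term_dominated; intros n Hn;
    [apply harm_div_pow_le_majorant | apply harm_div_pow_le_majorant
    | apply harm0_div_pow_le_majorant]; lia.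
Qed.

Lemma is_series_T_term_succ r :
  ex_series (fun k => T_term p1 p2 r (S k)) ->
  is_series (fun k => T_term p1 p2 (S r) (S k))
    (S5 p1 p2 1 r + S5 p2 p1 1 r - S5 0 (p1 + p2 + 1) 1 r - sum1 (T_term p1 p2 r)).
Proof.
  intros HT. destruct (ex_series_S5_terms r) as (H12 & H21 & H0).
  apply is_series_incr_1. rewrite T_term_at_0. change (plus ?x 0) with (x + 0). rewrite Rplus_0_r.
  apply (is_series_ext (fun n => S5_term p1 p2 1 r (S n) + S5_term p2 p1 1 r (S n)
                         - S5_term 0 (p1 + p2 + 1) 1 r (S n) - T_term p1 p2 r (S n))).
  { intros n. symmetry. apply T_term_succ. }
  apply Series_correct in H12, H21, H0, HT.
  exact (is_series_minus _ _ _ _ (is_series_minus _ _ _ _ (is_series_plus _ _ _ _ H12 H21) H0) HT).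
Qed.

Lemma ex_series_T_term r : ex_series (fun k => T_term p1 p2 r (S k)).
Proof.
  induction r as [|r IH]; [apply ex_series_T_term_0; assumption|].
  eexists. apply is_series_T_term_succ, IH.
Qed.

Lemma sum1_T_term_succ r : sum1 (T_term p1 p2 (S r)) =
  S5 p1 p2 1 r + S5 p2 p1 1 r - S5 0 (p1 + p2 + 1) 1 r - sum1 (T_term p1 p2 r).
Proof. apply is_series_unique, is_series_T_term_succ, ex_series_T_term. Qed.

End Recursion.

Lemma Sppm_term_S p1 p2 k : Sppm_term p1 p2 1 (S k) = T_term p1 p2 0 (S k).
Proof.
  unfold Sppm_term, T_term. rewrite Nat.add_0_r, neg1_pow_S_add1, Nat.sub_succ, Nat.sub_0_r, pow_1.
  reflexivity.
Qed.

Lemma Spm_term_S q m k : Spm_term q (m + 1) (S k) = S5_term q m 1 0 (S k).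
Proof.
  unfold Spm_term, S5_term.
  rewrite Nat.add_0_r, neg1_pow_S_add1, Nat.sub_succ, Nat.sub_0_r, pow_add, !pow_1.
  reflexivity.
Qed.

Lemma zetabar_term_S s k : zetabar_term s (S k) = S5_term 0 s 1 0 (S k).
Proof.
  unfold zetabar_term, S5_term.
  rewrite Nat.add_0_r, neg1_pow_S_add1, Nat.sub_succ, Nat.sub_0_r, harm0, pow_1.
  assert (0 < INR (S k)) by (apply lt_0_INR; lia).
  field. split; [|apply pow_nonzero]; lra.
Qed.

Lemma fsum_from_snoc a l g : fsum_from a (S l) g = fsum_from a l g + g (a + l)%nat.
Proof.
  revert a. induction l as [|l IH]; intros a; simpl.
  - rewrite Nat.add_0_r. ring.
  - rewrite Nat.add_succ_r. specialize (IH (S a)). simpl in IH. rewrite IH. ring.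
Qed.

Lemma fsum_from_ext a l f g :
  (forall j, (a <= j < a + l)%nat -> f j = g j) -> fsum_from a l f = fsum_from a l g.
Proof.
  revert a. induction l as [|l IH]; intros a Hfg; simpl; [reflexivity|].
  rewrite (Hfg a), (IH (S a)); [reflexivity | intros; apply Hfg; lia | lia].
Qed.

Lemma fsum_from_scal a l c g : fsum_from a l (fun j => c * g j) = c * fsum_from a l g.
Proof. revert a. induction l as [|l IH]; intros a; simpl; [ring|]. rewrite IH. ring. Qed.

Lemma fsum_1 b g : fsum 1 b g = fsum_from 1 b g.
Proof. unfold fsum. rewrite Nat.sub_succ, Nat.sub_0_r. reflexivity. Qed.

Lemma alternating_recurrence (x Y Z : nat -> R) :
  (forall r, x (S r) = Y r - Z r - x r) -> forall m,
  x (S m) = (-1) ^ S m * (x O - Y O + Z O)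
            + fsum_from 1 m (fun j => (-1) ^ (m - j) * Y j)
            + fsum_from 1 m (fun j => (-1) ^ (S m - j) * Z j).
Proof.
  intros Hrec m. induction m as [|m IH]; [rewrite Hrec; simpl; ring|].
  rewrite Hrec, IH, !fsum_from_snoc.
  rewrite (fsum_from_ext 1 m (fun j => (-1) ^ (S m - j) * Y j)
             (fun j => -1 * ((-1) ^ (m - j) * Y j))).
  2: { intros j Hj. replace (S m - j)%nat with (S (m - j)) by lia. simpl. ring. }
  rewrite (fsum_from_ext 1 m (fun j => (-1) ^ (S (S m) - j) * Z j)
             (fun j => -1 * ((-1) ^ (S m - j) * Z j))).
  2: { intros j Hj. replace (S (S m) - j)%nat with (S (S m - j)) by lia. simpl. ring. }
  rewrite !fsum_from_scal.
  replace (S m - (1 + m))%nat with O by lia.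
  replace (S (S m) - (1 + m))%nat with 1%nat by lia.
  change (1 + m)%nat with (S m). simpl pow. ring.
Qed.

Lemma sum1_T_term_closed_form p1 p2 m : (1 <= p1)%nat -> (1 <= p2)%nat ->
  sum1 (T_term p1 p2 (S m)) =
  (-1) ^ S m * (Sppm p1 p2 1 - Spm p1 (p2 + 1) - Spm p2 (p1 + 1) + zetabar (p1 + p2 + 1))
  + fsum_from 1 m (fun j => (-1) ^ (m - j) * (S5 p1 p2 1 j + S5 p2 p1 1 j))
  + fsum_from 1 m (fun j => (-1) ^ (S m - j) * S5 0 (p1 + p2 + 1) 1 j).
Proof.
  intros hp1 hp2.
  rewrite (alternating_recurrence (fun r => sum1 (T_term p1 p2 r))
             (fun r => S5 p1 p2 1 r + S5 p2 p1 1 r) (fun r => S5 0 (p1 + p2 + 1) 1 r)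
             (sum1_T_term_succ p1 p2 hp1 hp2) m).
  assert (HT : sum1 (T_term p1 p2 0) = Sppm p1 p2 1)
    by (apply Series_ext; intros k; symmetry; apply Sppm_term_S).
  assert (H12 : S5 p1 p2 1 0 = Spm p1 (p2 + 1))
    by (apply Series_ext; intros k; symmetry; apply Spm_term_S).
  assert (H21 : S5 p2 p1 1 0 = Spm p2 (p1 + 1))
    by (apply Series_ext; intros k; symmetry; apply Spm_term_S).
  assert (H0 : S5 0 (p1 + p2 + 1) 1 0 = zetabar (p1 + p2 + 1))
    by (apply Series_ext; intros k; symmetry; apply zetabar_term_S).
  rewrite HT, H12, H21, H0. ring.
Qed.

Theorem lemma9 (p1 p2 r : nat) (hp1 : (1 <= p1)%nat) (hp2 : (1 <= p2)%nat)
  (hr : (1 <= r)%nat) :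
  conv1 (Sppm_term p1 p2 1) /\ conv1 (Spm_term p1 (p2 + 1)) /\
  conv1 (Spm_term p2 (p1 + 1)) /\ conv1 (zetabar_term (p1 + p2 + 1)) /\
  (forall j : nat, (1 <= j <= r - 1)%nat ->
     conv1 (S5_term p1 p2 1 j) /\ conv1 (S5_term p2 p1 1 j) /\
     conv1 (S5_term 0 (p1 + p2 + 1) 1 j)) /\
  is_series (fun k => T_term p1 p2 r (S k))
    ((-1) ^ r * (Sppm p1 p2 1 - Spm p1 (p2 + 1) - Spm p2 (p1 + 1)
                 + zetabar (p1 + p2 + 1))
     + fsum 1 (r - 1) (fun j => (-1) ^ (r - 1 - j) * (S5 p1 p2 1 j + S5 p2 p1 1 j))
     + fsum 1 (r - 1) (fun j => (-1) ^ (r - j) * S5 0 (p1 + p2 + 1) 1 j)).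
Proof.
  destruct (ex_series_S5_terms p1 p2 hp1 hp2 0) as (H12 & H21 & H0).
  unfold conv1. split; [|split; [|split; [|split; [|split]]]].
  - exact (ex_series_ext _ _ (fun k => eq_sym (Sppm_term_S p1 p2 k))
                          (ex_series_T_term p1 p2 hp1 hp2 0)).
  - exact (ex_series_ext _ _ (fun k => eq_sym (Spm_term_S p1 p2 k)) H12).
  - exact (ex_series_ext _ _ (fun k => eq_sym (Spm_term_S p2 p1 k)) H21).
  - exact (ex_series_ext _ _ (fun k => eq_sym (zetabar_term_S _ k)) H0).
  - intros j _. apply ex_series_S5_terms; assumption.
  - destruct r as [|m]; [lia|].
    rewrite !fsum_1. replace (S m - 1)%nat with m by lia.
    rewrite <- sum1_T_term_closed_form by assumption.
    apply Series_correct, ex_series_T_term; assumption.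
Qed.
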